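(* Let $A$ be a cirquent with a subcirquent $B$, let $B'$ be a cirquent with $\overline{B'}<\overline{B}$, and let $A'$ be the result of replacing an occurrence of $B$ in $A$ by $B'$. Then $\overline{A'}<\overline{A}$.
   Context: Cirquents: $\top$, $\bot$ and literals ($p$ or $\neg p$ for an elementary letter $p$) are cirquents; if $A,B$ are cirquents then so are $A\vee B$, $A\wedge B$, $A\sqcap^cB$ ($c$ a conjunctive cluster) and $A\sqcup^cB$ ($c$ a disjunctive cluster). Tetration: ${}^1a=a$, ${}^{n+1}a=a^{({}^na)}$. The rank $\overline{C}$ of a cirquent $C$: $\overline{C}=1$ if $C$ is $\top$, $\bot$ or a literal; $\overline{A\sqcup^cB}=\overline{A\sqcap^cB}=\overline{A}+\overline{B}$; $\overline{A\wedge B}=5^{\overline{A}+\overline{B}}$; $\overline{A\vee B}={}^{(\overline{A}+\overline{B})}5$. *)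

From Stdlib Require Import Arith.

(* Conjunctive and disjunctive clusters are just labels attached to the
   choice connectives; their nature is determined by the connective. *)
Definition letter := nat.
Definition cluster := nat.

Inductive cirquent : Type :=
| CTop : cirquent
| CBot : cirquent
| CPos : letter -> cirquent
| CNeg : letter -> cirquent
| COr  : cirquent -> cirquent -> cirquent
| CAnd : cirquent -> cirquent -> cirquent
| CCAnd : cluster -> cirquent -> cirquent -> cirquent
| CCOr  : cluster -> cirquent -> cirquent -> cirquent.

(* Tetration: tet a 1 = a, tet a (n+1) = a ^ (tet a n).
   (tet a 0 := 1 is an irrelevant convention: it is only used with n >= 2.) *)
Fixpoint tet (a n : nat) : nat :=
  match n with
  | 0 => 1
  | 1 => a
  | S m => a ^ (tet a m)
  end.

Fixpoint rank (C : cirquent) : nat :=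
  match C with
  | CTop | CBot | CPos _ | CNeg _ => 1
  | CCAnd _ A B | CCOr _ A B => rank A + rank B
  | CAnd A B => 5 ^ (rank A + rank B)
  | COr A B => tet 5 (rank A + rank B)
  end.

(* One-hole contexts: an occurrence of a subcirquent inside a cirquent. *)
Inductive ctx : Type :=
| Hole : ctx
| OrL : ctx -> cirquent -> ctx
| OrR : cirquent -> ctx -> ctx
| AndL : ctx -> cirquent -> ctx
| AndR : cirquent -> ctx -> ctx
| CAndL : cluster -> ctx -> cirquent -> ctx
| CAndR : cluster -> cirquent -> ctx -> ctx
| COrL : cluster -> ctx -> cirquent -> ctx
| COrR : cluster -> cirquent -> ctx -> ctx.

Fixpoint plug (K : ctx) (D : cirquent) : cirquent :=
  match K with
  | Hole => D
  | OrL K' E => COr (plug K' D) E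
  | OrR E K' => COr E (plug K' D)
  | AndL K' E => CAnd (plug K' D) E
  | AndR E K' => CAnd E (plug K' D)
  | CAndL c K' E => CCAnd c (plug K' D) E
  | CAndR c E K' => CCAnd c E (plug K' D)
  | COrL c K' E => CCOr c (plug K' D) E
  | COrR c E K' => CCOr c E (plug K' D)
  end.

(* Each connective computes the rank of a compound cirquent as a strictly
   increasing function of the ranks of its two components (a sum, 5 to a sum,
   or a tower of 5s of height a sum), so by induction on the context the rank
   of [plug K D] is strictly increasing in the rank of [D]. *)

From Stdlib Require Import Arith Lia.

Lemma tet_lt_succ (a n : nat) : 1 < a -> tet a n < tet a (S n).
Proof.
  intros Ha; destruct n as [|m].
  - exact Ha.
  - change (tet a (S m) < a ^ tet a (S m)).
    now apply Nat.pow_gt_lin_r.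
Qed.

Lemma tet_lt_mono (a m n : nat) : 1 < a -> m < n -> tet a m < tet a n.
Proof.
  intros Ha Hmn; induction Hmn as [|n _ IH].
  - now apply tet_lt_succ.
  - apply Nat.lt_trans with (tet a n); [exact IH | now apply tet_lt_succ].
Qed.

Theorem lemma7p2 (K : ctx) (B B' : cirquent) :
  rank B' < rank B -> rank (plug K B') < rank (plug K B).
Proof.
  intros HB; induction K; simpl.
  - exact HB.
  - apply tet_lt_mono; lia.
  - apply tet_lt_mono; lia.
  - apply Nat.pow_lt_mono_r; lia.
  - apply Nat.pow_lt_mono_r; lia.
  - lia.
  - lia.
  - lia.
  - lia.
Qed.
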